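(* Let $q=p^m$ with $p$ an odd prime, $m\ge1$, and $q\equiv 5\pmod 6$. For $b\in\mathbb{F}_{q^2}$ let $\delta(b)=\#\{u\in\mathbb{F}_{q^2}:\ 2u^{q+1}+u^2=b\}$. Then there are exactly $q-1$ elements $b\in\mathbb{F}_{q^2}^*$ with $\delta(b)=2$.
   Context: $\delta(b)$ equals $\delta_f(1,b+\tfrac14)$ for $f(x)=x^{q+2}$, where $\delta_f(a,b)=\#\{x\in\mathbb{F}_{q^2}: f(x+a)-f(x)=b\}$. *)

From mathcomp Require Import all_boot all_order all_algebra all_field.
Set Implicit Arguments. Unset Strict Implicit. Unset Printing Implicit Defensive.
Import GRing.Theory.
Local Open Scope ring_scope.

Definition delta (F : finFieldType) (q : nat) (b : F) : nat :=
  #|[set u : F | 2 * u ^+ q.+1 + u ^+ 2 == b]|.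

From HB Require Import structures.
From mathcomp Require Import all_boot all_order all_algebra all_field.
From mathcomp Require Import ring zify.
Set Implicit Arguments. Unset Strict Implicit. Unset Printing Implicit Defensive.
Import GRing.Theory.
Local Open Scope ring_scope.

(* Write [sigma u = u ^+ q] for the conjugate of [u] over F_q, so that [delta q b] counts the
   [u] with [quad u := u^2 + 2 u (sigma u) = b]; as [quad (- u) = quad u], [delta q (quad u) = 2]
   says that the fibre of [quad u] is [{u, -u}].  Since [q = 2 (mod 3)], F contains a square root
   [r] of [-3] with [sigma r = - r], namely [2 w + 1] for a primitive cube root of unity [w].
   The involution [twist] preserves [quad], and [twist u = u] (resp. [- u]) exactly when
   [sigma u = l u] (resp. [sigma u = (sigma l) u]), where [l = (1 - r) / (1 + r)]; conversely,
   for such [u] the fibre of [quad u] is [{u, -u}] and [quad u != 0].  So the [u] mapped to a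
   counted [b] are the solutions of [u ^+ q.-1 = l] or [u ^+ q.-1 = sigma l], and since
   [l ^+ q.+1 = l * sigma l = 1] each equation has [q - 1] solutions.  Every counted [b] has two
   preimages, hence there are [q - 1] of them. *)

Definition cayley (F : fieldType) (r : F) := (1 - r) / (1 + r).

Section QuadraticForm.
Variables (F : fieldType) (sigma : {rmorphism F -> F}).
Hypotheses (sigmaK : involutive sigma) (two_neq0 : 2 != 0 :> F) (three_neq0 : 3 != 0 :> F).

Definition quad (u : F) := u ^+ 2 + 2 * u * sigma u.

Lemma quad0 : quad 0 = 0.
Proof. by rewrite /quad rmorph0 mulr0 expr2 mul0r addr0. Qed.

Lemma quadN u : quad (- u) = quad u.
Proof. by rewrite /quad rmorphN; ring. Qed.

Lemma conj_quad u : sigma (quad u) = sigma u ^+ 2 + 2 * u * sigma u.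
Proof.
by rewrite /quad rmorphD rmorphXn !rmorphM rmorph_nat sigmaK; ring.
Qed.

Lemma quad_sub_conj u : quad u - sigma (quad u) = (u + sigma u) * (u - sigma u).
Proof. by rewrite conj_quad /quad; ring. Qed.

Lemma quad_add_conj u :
  2 * (quad u + sigma (quad u)) = 3 * (u + sigma u) ^+ 2 - (u - sigma u) ^+ 2.
Proof. by rewrite conj_quad /quad; ring. Qed.

Section Twist.
Variable r : F.
Hypotheses (r_sq : r ^+ 2 = -3) (conj_r : sigma r = - r).

Lemma r_neq0 : r != 0.
Proof. by apply: contra_eqN r_sq => /eqP->; rewrite expr0n eq_sym oppr_eq0. Qed.

Lemma mul_one_addr_subr : (1 + r) * (1 - r) = 2 * 2.
Proof. by rewrite mulrC -subr_sqr expr1n r_sq; ring. Qed.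

Lemma one_addr_neq0 : 1 + r != 0.
Proof.
by apply: contra_neq (mulf_neq0 two_neq0 two_neq0); rewrite -mul_one_addr_subr => ->; rewrite mul0r.
Qed.

Lemma one_subr_neq0 : 1 - r != 0.
Proof.
by apply: contra_neq (mulf_neq0 two_neq0 two_neq0); rewrite -mul_one_addr_subr => ->; rewrite mulr0.
Qed.

Lemma conj_cayley : sigma (cayley r) = cayley (- r).
Proof. by rewrite /cayley fmorph_div rmorphB rmorphD rmorph1 conj_r. Qed.

Lemma cayley_mulN : cayley r * cayley (- r) = 1.
Proof.
have n1 := one_addr_neq0; have n2 := one_subr_neq0.
by rewrite /cayley opprK; field; rewrite n1 n2.
Qed.

Lemma cayley_neqN : cayley r != cayley (- r).
Proof.
have n1 := one_addr_neq0; have n2 := one_subr_neq0.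
rewrite -subr_eq0.
have -> : cayley r - cayley (- r) = - r * (2 * 2) / ((1 + r) * (1 - r)).
  by rewrite /cayley opprK; field; rewrite n1 n2.
by rewrite mul_one_addr_subr mulfK ?mulf_neq0 // oppr_eq0 r_neq0.
Qed.

Lemma conj_cayleyE u : sigma u = cayley r * u <-> u - sigma u = r * (u + sigma u).
Proof.
have n1 := one_addr_neq0.
split=> [->|h]; first by rewrite /cayley; field; rewrite n1.
apply: (mulIf n1); rewrite /cayley mulrAC divfK //.
have -> : sigma u * (1 + r) = (1 - r) * u - ((u - sigma u) - r * (u + sigma u)) by ring.
by rewrite h subrr subr0.
Qed.

Lemma conj_add_neq0 u : u != 0 -> u - sigma u = r * (u + sigma u) -> u + sigma u != 0.
Proof.
move=> u0 e_rs; apply: contra_neq u0 => s0.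
apply: (mulfI two_neq0); rewrite mulr0.
have -> : 2 * u = (u + sigma u) + (u - sigma u) by ring.
by rewrite e_rs s0 mulr0 addr0.
Qed.

(* In the coordinates [s = u + sigma u], [e = u - sigma u] this is [(s, e) |-> (e / r, r s)],
   which preserves [s e] and [3 s^2 - e^2], hence [quad]. *)
Definition twist u := ((u - sigma u) / r + (u + sigma u) * r) / 2.

Lemma conj_twist u : sigma (twist u) = ((u - sigma u) / r - (u + sigma u) * r) / 2.
Proof.
have r0 := r_neq0.
rewrite /twist !(fmorph_div, rmorphD, rmorphN, rmorphM, fmorphV, rmorph1) sigmaK conj_r.
by field; rewrite oppr_eq0 r0 two_neq0.
Qed.

Lemma quad_twist u : quad (twist u) = quad u.
Proof.
have r0 := r_neq0.
apply/eqP; rewrite -subr_eq0; apply/eqP.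
have -> : quad (twist u) - quad u =
    (r ^+ 2 + 3) * (((u - sigma u) ^+ 2 / r ^+ 2 - (u + sigma u) ^+ 2) / 2 / 2).
  by rewrite /quad conj_twist /twist; field; rewrite r0 two_neq0.
by rewrite r_sq addNr mul0r.
Qed.

Lemma twist_fixed u : twist u = u -> sigma u = cayley r * u.
Proof.
move=> fix_u; apply/conj_cayleyE/eqP; rewrite -subr_eq0 mulrC.
have : (1 - r) * ((u - sigma u) - (u + sigma u) * r) = 2 * r * (twist u - u).
  by rewrite /twist; field; rewrite r_neq0 two_neq0.
by rewrite fix_u subrr mulr0 => /eqP; rewrite mulf_eq0 (negPf one_subr_neq0).
Qed.

Lemma quad_fiber u w :
  u != 0 -> sigma u = cayley r * u -> quad w = quad u -> w = u \/ w = - u.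
Proof.
move=> u0 /conj_cayleyE e_rs quad_wu.
have s0 := conj_add_neq0 u0 e_rs.
have prod : (w + sigma w) * (w - sigma w) = r * (u + sigma u) ^+ 2.
  by rewrite -quad_sub_conj quad_wu quad_sub_conj e_rs; ring.
have sum : 3 * (w + sigma w) ^+ 2 - (w - sigma w) ^+ 2 = 2 * 3 * (u + sigma u) ^+ 2.
  by rewrite -quad_add_conj quad_wu quad_add_conj e_rs exprMn r_sq; ring.
have w_half : w = ((w + sigma w) + (w - sigma w)) / 2 by field.
set sw := w + sigma w in prod sum w_half *; set ew := w - sigma w in prod sum w_half *.
have : 3 * (sw ^+ 2 - (u + sigma u) ^+ 2) ^+ 2 = 0.
  have -> : 3 * (sw ^+ 2 - (u + sigma u) ^+ 2) ^+ 2 =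
      sw ^+ 2 * ((3 * sw ^+ 2 - ew ^+ 2) - 2 * 3 * (u + sigma u) ^+ 2)
      + (sw * ew) ^+ 2 + 3 * (u + sigma u) ^+ 4 by ring.
  by rewrite sum prod exprMn r_sq; ring.
move/eqP; rewrite mulf_eq0 (negPf three_neq0) expf_eq0 /= subr_eq0 eqf_sqr.
have u_half : u = ((u + sigma u) + r * (u + sigma u)) / 2.
  by rewrite -e_rs; field.
case/orP=> /eqP sw_s; [left | right].
- have ew_e : ew = r * (u + sigma u).
    by apply: (mulfI s0); rewrite -{1}sw_s prod; ring.
  by rewrite w_half sw_s ew_e -u_half.
- have ew_e : ew = - (r * (u + sigma u)).
    apply: (mulfI s0); rewrite -[in LHS](opprK (u + sigma u)) -sw_s mulNr prod.
    ring.
  by rewrite w_half sw_s ew_e [in RHS]u_half; field.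
Qed.

Lemma quad_cayley_neq0 u : u != 0 -> sigma u = cayley r * u -> quad u != 0.
Proof.
move=> u0 /conj_cayleyE e_rs; have s0 := conj_add_neq0 u0 e_rs.
apply: contra_neq (mulf_neq0 r_neq0 (expf_neq0 2 s0)) => q0.
by rewrite expr2 mulrA -e_rs mulrC -quad_sub_conj q0 rmorph0 subr0.
Qed.

End Twist.

Lemma twistN r u : twist (- r) u = - twist r u.
Proof. by rewrite /twist invrN mulrN mulrN -opprD mulNr. Qed.

Lemma quad_fiberP r u : r ^+ 2 = -3 -> sigma r = - r -> u != 0 ->
  (forall w, quad w = quad u -> w = u \/ w = - u) <->
  sigma u = cayley r * u \/ sigma u = cayley (- r) * u.
Proof.
move=> r_sq conj_r u0; have r_sqN : (- r) ^+ 2 = -3 by rewrite sqrrN.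
split=> [fiber_u | [conj_u | conj_u] w]; last 2 first.
- exact: (quad_fiber r_sq u0 conj_u).
- exact: (quad_fiber r_sqN u0 conj_u).
have [twist_u | twist_u] := fiber_u _ (quad_twist r_sq conj_r u).
  by left; apply: twist_fixed twist_u.
by right; apply: twist_fixed; rewrite // twistN twist_u opprK.
Qed.
End QuadraticForm.

Lemma card_preimset_fibers (aT rT : finType) (f : aT -> rT) (B : {set rT}) :
  #|f @^-1: B| = (\sum_(b in B) #|f @^-1: [set b]|)%N.
Proof.
rewrite -sum1_card (partition_big f (mem B)) => [|x]; last by rewrite inE.
apply: eq_bigr => b bB; rewrite -sum1_card; apply: eq_bigl => x.
by rewrite !inE andb_idl // => /eqP->.
Qed.

Lemma card_pow_fiber (F : finFieldType) (k : nat) (mu : F) :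
  (k %| #|F|.-1)%N -> mu ^+ (#|F|.-1 %/ k) = 1 -> #|[set u : F | u ^+ k == mu]| = k.
Proof.
(* The fibres of [u |-> u ^+ k] over the [(n %/ k)]-th roots of unity partition the [n] units;
   each has at most [k] elements and there are at most [n %/ k] of them. *)
set n := #|F|.-1 => dvd_k_n mu_root.
have n_gt0 : (0 < n)%N by rewrite /n -subn1 subn_gt0 card_finNzRing_gt1.
have k_gt0 : (0 < k)%N.
  by rewrite lt0n; apply: contraTneq dvd_k_n => ->; rewrite dvd0n -lt0n.
have nk_gt0 : (0 < n %/ k)%N by rewrite divn_gt0 // dvdn_leq.
set fiber := fun nu : F => [set u : F | u ^+ k == nu].
have fiber_le nu : (#|fiber nu| <= k)%N.
  rewrite -ltnS -(size_XnsubC nu k_gt0) cardE; apply: max_poly_roots.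
  - by rewrite -size_poly_eq0 size_XnsubC.
  - by apply/allP=> u; rewrite mem_enum inE rootE !hornerE => /eqP->; rewrite subrr.
  - exact: enum_uniq.
pose M := [set nu : F | nu ^+ (n %/ k) == 1].
have card_M : (#|M| <= n %/ k)%N.
  rewrite cardE; apply: max_unity_roots => //; last exact: enum_uniq.
  by apply/allP=> nu; rewrite mem_enum inE unity_rootE.
have unitE (u : F) : (u ^+ k \in M) = (u != 0).
  rewrite inE -exprM mulnC divnK //; apply/eqP/idP => [un1|u0].
    by apply: contra_eq_neq un1 => ->; rewrite expr0n gtn_eqF // eq_sym oner_neq0.
  by apply: (mulIf u0); rewrite mul1r -exprSr prednK ?expf_card // ltnW ?card_finNzRing_gt1.
have sum_fibers : (\sum_(nu in M) #|fiber nu| = n)%N.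
  have preimM : (fun u : F => u ^+ k) @^-1: M = [set~ 0].
    by apply/setP=> u; rewrite inE /= unitE !inE.
  rewrite /n -(cardsC1 (0 : F)) -preimM card_preimset_fibers.
  by apply: eq_bigr => nu _; apply: eq_card => u; rewrite !inE.
have fibers_eq := leqif_sum (fun nu (_ : nu \in M) => leqif_eq (fiber_le nu)).
have card_Mk : (#|M| * k <= n)%N by rewrite -[n](divnK dvd_k_n) leq_mul2r card_M orbT.
have /forall_inP fibers_k : [forall (nu | nu \in M), #|fiber nu| == k].
  rewrite -fibers_eq.2 sum_fibers sum_nat_const eqn_leq card_Mk andbT.
  by rewrite -{1}sum_fibers -sum_nat_const fibers_eq.1.
by apply/eqP/fibers_k; rewrite inE mu_root.
Qed.

Section FiniteQuadraticForm.
Variables (F : finFieldType) (sigma : {rmorphism F -> F}).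
Hypotheses (sigmaK : involutive sigma) (two_neq0 : 2 != 0 :> F) (three_neq0 : 3 != 0 :> F).
Variable r : F.
Hypotheses (r_sq : r ^+ 2 = -3) (conj_r : sigma r = - r).

Definition conj_eigen (mu : F) := [set u : F | (u != 0) && (sigma u == mu * u)].

Lemma quad_fiber_card2 u :
  (quad sigma u != 0) && (#|[set w | quad sigma w == quad sigma u]| == 2)%N =
  (u \in conj_eigen (cayley r)) || (u \in conj_eigen (cayley (- r))).
Proof.
have [->|u0] := eqVneq u 0; first by rewrite quad0 eqxx !inE eqxx.
have u_neqN : u != - u.
  apply: contra_neq u0 => u_eqN; apply: (mulfI two_neq0).
  by rewrite mulr0 mulr2n mulrDl mul1r {2}u_eqN subrr.
set A := [set w | quad sigma w == quad sigma u].
have uNu_A : [set u; - u] \subset A.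
  by apply/subsetP=> w; rewrite !inE => /orP[] /eqP->; rewrite ?quadN eqxx.
have cardA : (#|A| == 2)%N = (A \subset [set u; - u]).
  apply/idP/idP => [/eqP cA | A_uNu].
    by have /eqP <- : [set u; - u] == A by rewrite eqEcard uNu_A cA cards2 u_neqN.
  have := subset_leq_card uNu_A; have := subset_leq_card A_uNu.
  by rewrite cards2 u_neqN eqn_leq => -> ->.
have fiberP : reflect (forall w, quad sigma w = quad sigma u -> w = u \/ w = - u)
                      (A \subset [set u; - u]).
  apply: (iffP subsetP) => [A_uNu w quad_w | fiber_u w].
    by have := A_uNu w; rewrite !inE quad_w eqxx => /(_ isT) /orP[] /eqP; auto.
  by rewrite !inE => /eqP /fiber_u [] ->; rewrite eqxx ?orbT.
have quad_fiberP_u := quad_fiberP sigmaK two_neq0 three_neq0 r_sq conj_r u0.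
rewrite cardA !inE u0 /=; apply/andP/orP => [[_ /fiberP] | conj_u].
  by move/quad_fiberP_u => [] ->; rewrite eqxx; auto.
split; last by apply/fiberP/quad_fiberP_u; case: conj_u => /eqP; auto.
by case: conj_u => /eqP; apply: quad_cayley_neq0 u0 => //; rewrite sqrrN.
Qed.

Lemma card_quad_fiber2 :
  (2 * #|[set b : F | (b != 0%R) && (#|[set u | quad sigma u == b]| == 2)]|)%N =
  (#|conj_eigen (cayley r)| + #|conj_eigen (cayley (- r))|)%N.
Proof.
set B := [set b : F | _].
have preimB : quad sigma @^-1: B = conj_eigen (cayley r) :|: conj_eigen (cayley (- r)).
  by apply/setP=> u; rewrite in_setU -quad_fiber_card2 !inE.
have eigen_disjoint : conj_eigen (cayley r) :&: conj_eigen (cayley (- r)) = set0.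
  apply/setP=> u; rewrite !inE; apply/negP => /andP[/andP[u0 /eqP->] /andP[_ /eqP]].
  by move/(mulIf u0)/eqP; rewrite (negPf (cayley_neqN two_neq0 three_neq0 r_sq)).
have := cardsU (conj_eigen (cayley r)) (conj_eigen (cayley (- r))).
rewrite eigen_disjoint cards0 subn0 -preimB card_preimset_fibers => <-.
rewrite mulnC -sum_nat_const; apply: eq_bigr => b; rewrite inE => /andP[_ /eqP <-].
by apply: eq_card => u; rewrite !inE.
Qed.

End FiniteQuadraticForm.

Section FrobeniusPower.
Variables (F : finFieldType) (q : nat).
Hypotheses (q_pchar : [pchar F].-nat q) (card_F : #|F| = (q ^ 2)%N).

Definition conjq (x : F) := x ^+ q.

Fact conjq_is_nmod_morphism : nmod_morphism conjq.
Proof.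
split=> [|x y]; last exact: exprDn_pchar.
by rewrite /conjq expr0n; case: q q_pchar.
Qed.

Fact conjq_is_monoid_morphism : monoid_morphism conjq.
Proof. by split=> [|x y]; rewrite /conjq ?expr1n ?exprMn. Qed.

HB.instance Definition _ := GRing.isNmodMorphism.Build F F conjq conjq_is_nmod_morphism.
HB.instance Definition _ := GRing.isMonoidMorphism.Build F F conjq conjq_is_monoid_morphism.

Lemma conjqK : involutive conjq.
Proof. by move=> x; rewrite /conjq -exprM mulnn -card_F expf_card. Qed.

Lemma q_gt1 : (1 < q)%N.
Proof. by have := card_finNzRing_gt1 F; rewrite card_F; case: q => [|[]]. Qed.

Lemma card_F_pred : #|F|.-1 = (q.-1 * q.+1)%N.
Proof. by rewrite card_F; have := q_gt1; nia. Qed.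

Lemma coprime_natf_neq0 n : coprime q n -> n%:R != 0 :> F.
Proof.
move=> q_n; have pdiv_pchar := pnatPpi q_pchar (eqbRL (pi_pdiv q) q_gt1).
rewrite -(dvdn_pcharf pdiv_pchar) -prime_coprime ?pdiv_prime ?q_gt1 //.
exact: coprime_dvdl (pdiv_dvd q) q_n.
Qed.

Lemma card_conj_eigen mu : mu ^+ q.+1 = 1 -> #|conj_eigen conjq mu| = q.-1.
Proof.
move=> mu_root; have qm1_gt0 : (0 < q.-1)%N by rewrite -subn1 subn_gt0 q_gt1.
have mu0 : mu != 0 by apply: contra_eq_neq mu_root => ->; rewrite expr0n eq_sym oner_neq0.
have -> : conj_eigen conjq mu = [set u | u ^+ q.-1 == mu].
  apply/setP=> u; rewrite !inE /= /conjq -{1}(prednK (ltnW q_gt1)) exprSr.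
  have [->|u0] := eqVneq u 0; first by rewrite expr0n gtn_eqF //= eq_sym (negPf mu0).
  by apply/eqP/eqP => [/(mulIf u0)|->].
apply: card_pow_fiber; first by rewrite card_F_pred dvdn_mulr.
by rewrite card_F_pred mulKn.
Qed.

Lemma exists_sqrt_m3 : (q %% 3 = 2)%N -> exists2 r : F, r ^+ 2 = -3 & conjq r = - r.
Proof.
move=> q_mod3.
have dvd3 : (3 %| #|F|.-1)%N.
  by rewrite card_F_pred dvdn_mull // /dvdn -addn1 -modnDml q_mod3.
have /card_gt0P [w] : (0 < #|[set u : F | (u ^+ 3 == 1)%R] :\ 1%R|)%N.
  by have := card_pow_fiber dvd3 (expr1n _ _); rewrite (cardsD1 1) !inE expr1n eqxx add1n => -[->].
rewrite !inE => /andP[w_neq1 /eqP w3].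
have cyclo_w : w ^+ 2 + w + 1 = 0.
  have : (w - 1) * (w ^+ 2 + w + 1) = 0.
    have -> : (w - 1) * (w ^+ 2 + w + 1) = w ^+ 3 - 1 by ring.
    by rewrite w3 subrr.
  by move/eqP; rewrite mulf_eq0 subr_eq0 (negPf w_neq1) => /eqP.
have conj_w : conjq w = w ^+ 2.
  by rewrite /conjq (divn_eq q 3) q_mod3 exprD mulnC exprM w3 expr1n mul1r.
exists (2 * w + 1).
  have -> : (2 * w + 1) ^+ 2 = 4 * (w ^+ 2 + w + 1) - 3 by ring.
  by rewrite cyclo_w mulr0 sub0r.
rewrite rmorphD rmorphM rmorph1 rmorph_nat /= conj_w.
have -> : 2 * w ^+ 2 + 1 = - (2 * w + 1) + 2 * (w ^+ 2 + w + 1) by ring.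
by rewrite cyclo_w mulr0 addr0.
Qed.

Lemma delta_quad b : delta q b = #|[set u | quad conjq u == b]|.
Proof. by apply: eq_card => u; rewrite !inE /quad /= /conjq exprS; congr (_ == _); ring. Qed.

Lemma card_delta_eq2 : (q %% 6 = 5)%N ->
  #|[set b : F | (b != 0) & (delta q b == 2)%N]| = q.-1.
Proof.
move=> q_mod6; have q_mod3 : (q %% 3 = 2)%N by rewrite -(modn_dvdm q (isT : (3 %| 6)%N)) q_mod6.
have q_coprime6 : coprime q 6 by rewrite -coprime_modl q_mod6.
have two_neq0 := coprime_natf_neq0 (coprime_dvdr (isT : (2 %| 6)%N) q_coprime6).
have three_neq0 := coprime_natf_neq0 (coprime_dvdr (isT : (3 %| 6)%N) q_coprime6).
have [r r_sq conj_r] := exists_sqrt_m3 q_mod3.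
have cayley_root (s : F) : s ^+ 2 = -3 -> conjq s = - s -> cayley s ^+ q.+1 = 1.
  move=> s_sq conj_s; rewrite exprS -[cayley s ^+ q]/(conjq (cayley s)).
  by rewrite conj_cayley ?cayley_mulN.
under eq_finset => b do rewrite delta_quad.
have := card_quad_fiber2 conjqK two_neq0 three_neq0 r_sq conj_r.
rewrite !card_conj_eigen ?cayley_root ?sqrrN //; last by rewrite rmorphN /= conj_r.
by move=> card2; apply/eqP; rewrite -(eqn_pmul2l (isT : (0 < 2)%N)) card2 addnn mul2n.
Qed.
End FrobeniusPower.

Unset Implicit Arguments.
Local Close Scope ring_scope.

Theorem proposition6 (F : finFieldType) (p m : nat) :
  prime p -> odd p -> 0 < m -> (p ^ m) %% 6 = 5 -> #|F| = (p ^ m) ^ 2 ->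
  #|[set b : F | (b != 0)%R & delta (p ^ m) b == 2]| = (p ^ m).-1.
Proof.
(* [odd p] and [0 < m] follow from [p ^ m %% 6 = 5]. *)
move=> p_prime _ _ q_mod6 card_F.
have p_pchar : p \in [pchar F]%R.
  by apply: (card_finPcharP (n := m * 2)) => //; rewrite card_F expnM.
apply: card_delta_eq2 card_F q_mod6.
by rewrite pnatX (eq_pnat _ (pcharf_eq p_pchar)) pnat_id.
Qed.
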